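(* There is a $\mathbb{Q}$-valued function $\eta$ on the set of isomorphism classes of finite oriented trees such that: (i) if $T$ is a tree with one vertex and no edges, then $\eta(T)=1$; (ii) if an oriented tree $T'$ (resp. $U$) is obtained from an oriented tree $T$ by reversing the orientation of an edge $e$ (resp. by contracting $e$ to a point), then $\eta(T)+\eta(T')+\eta(U)=0$; (iii) if an oriented tree $T'$ (resp. $T''$) is obtained from an oriented tree $T$ by replacing two distinct edges $ab,ac$ with common origin $a$ by $ab,bc$ (resp. by $ac,cb$), and $U$ is obtained from $T$ by identifying $b$ with $c$ and $ab$ with $ac$, then $\eta(T)=\eta(T')+\eta(T'')+\eta(U)$.
   Context: An oriented tree is a finite tree each of whose edges is given an orientation; an edge $ab$ means an edge oriented from vertex $a$ to vertex $b$. Isomorphism of oriented trees preserves edge orientations. *)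

From HB Require Import structures.
From mathcomp Require Import all_boot all_order all_algebra.
Set Implicit Arguments. Unset Strict Implicit. Unset Printing Implicit Defensive.

(* A finite oriented graph on the vertex set 'I_nv, with edge set ed :
   (x, y) \in ed means an edge oriented from x to y. *)
Record ograph := OGraph { nv : nat; ed : {set 'I_nv * 'I_nv} }.

Definition uadj (T : ograph) : rel 'I_(nv T) :=
  fun u v => ((u, v) \in ed T) || ((v, u) \in ed T).

Definition is_otree (T : ograph) : Prop :=
  [/\ 0 < nv T,
      (forall x, (x, x) \notin ed T),
      (forall x y, (x, y) \in ed T -> (y, x) \notin ed T),
      (forall x y : 'I_(nv T), connect (@uadj T) x y)
    & #|ed T| = (nv T).-1 ].

Definition oiso (T1 T2 : ograph) : Prop :=
  exists g : 'I_(nv T1) -> 'I_(nv T2),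
    bijective g /\ forall x y, ((x, y) \in ed T1) = ((g x, g y) \in ed T2).

Definition reverse_edge (T : ograph) (a b : 'I_(nv T)) : ograph :=
  @OGraph (nv T) ((ed T :\ (a, b)) :|: [set (b, a)]).

Definition replace_edge (T : ograph) (x y u v : 'I_(nv T)) : ograph :=
  @OGraph (nv T) ((ed T :\ (x, y)) :|: [set (u, v)]).

(* [quotient_by T b c S E] : S is obtained from T by identifying the vertices
   b and c (and nothing else) via a surjection f, its edge set being the image
   of the edge set E (a subset of the edges of T) under f. *)
Definition quotient_by (T : ograph) (b c : 'I_(nv T))
    (E : {set 'I_(nv T) * 'I_(nv T)}) (S : ograph) : Prop :=
  exists f : 'I_(nv T) -> 'I_(nv S),
    [/\ (forall z, exists x, f x = z),
        f b = f c,
        (forall x y, f x = f y -> x = y \/ (x = b /\ y = c) \/ (x = c /\ y = b))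
      & ed S = [set (f e.1, f e.2) | e in E] ].

Definition contract_edge (T : ograph) (a b : 'I_(nv T)) (U : ograph) : Prop :=
  quotient_by a b (ed T :\ (a, b)) U.

Definition identify_ends (T : ograph) (b c : 'I_(nv T)) (U : ograph) : Prop :=
  quotient_by b c (ed T) U.

(* Let N_G(t) count the labellings of the vertices of an oriented graph G by
   1..t that strictly increase along every edge.  Sorting the labellings by the
   set of vertices carrying the largest label gives N_G(t+1) - N_G(t) as a sum
   of counts for smaller vertex sets, so N_G is a polynomial in t; eta(G) is its
   coefficient of t.  For an edge ab of T, the labellings of T - ab split
   according as the label of a is smaller than, larger than or equal to that of
   b, whence N_T + N_T' + N_U = N_(T - ab).  As T - ab has two components,
   N_(T - ab) is a product of two polynomials vanishing at 0, so it has no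
   linear term.  Likewise the labellings of T split according to the
   comparison of the labels of b and c, which gives N_T = N_T' + N_T'' + N_U
   exactly. *)

From mathcomp Require Import all_boot all_order all_algebra zify.
From Stdlib Require Import ClassicalEpsilon.
Set Implicit Arguments. Unset Strict Implicit. Unset Printing Implicit Defensive.
Import GRing.Theory Num.Theory.

Section BinomialSpan.

Variable R : numFieldType.
Local Open Scope ring_scope.

Definition binomial_span (N : nat) (f : nat -> R) :=
  exists c : nat -> R, forall t, f t = \sum_(m < N) c m * 'C(t, m)%:R.

Lemma eq_binomial_span N f g : f =1 g -> binomial_span N f -> binomial_span N g.
Proof. by move=> fg [c fc]; exists c => t; rewrite -fg. Qed.

Lemma binomial_span0 N : binomial_span N (fun=> 0).
Proof. by exists (fun=> 0) => t; rewrite big1 // => i _; rewrite mul0r. Qed.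

Lemma binomial_spanD N f g :
  binomial_span N f -> binomial_span N g -> binomial_span N (fun t => f t + g t).
Proof.
move=> [c fc] [d gd]; exists (fun m => c m + d m) => t.
by rewrite fc gd -big_split; apply: eq_bigr => i _; rewrite mulrDl.
Qed.

Lemma binomial_span_sum N (I : finType) (P : pred I) (F : I -> nat -> R) :
  (forall i, P i -> binomial_span N (F i)) ->
  binomial_span N (fun t => \sum_(i | P i) F i t).
Proof.
move=> FN; elim: (index_enum I) => [|i r IHr].
  by apply: eq_binomial_span (binomial_span0 N) => t; rewrite big_nil.
have [Pi|nPi] := boolP (P i).
  apply: eq_binomial_span (binomial_spanD (FN i Pi) IHr) => t.
  by rewrite big_cons Pi.
by apply: eq_binomial_span IHr => t; rewrite big_cons (negbTE nPi).
Qed.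

(* By Pascal's rule, t |-> 'C(t, m.+1) is an antidifference of t |-> 'C(t, m). *)
Lemma binomial_span_antidiff N f g :
  binomial_span N g -> (forall t, f t.+1 = f t + g t) -> binomial_span N.+1 f.
Proof.
move=> [c gc] fS; exists (fun m => if m is m'.+1 then c m' else f 0%N).
elim=> [|t IHt].
  by rewrite big_ord_recl bin0 mulr1 big1 ?addr0 // => i _; rewrite bin0n mulr0.
rewrite fS IHt gc !big_ord_recl !bin0 -addrA; congr (_ + _).
by rewrite -big_split; apply: eq_bigr => i _; rewrite binS natrD mulrDr.
Qed.

Lemma natr_ffact t m : (t ^_ m)%:R = \prod_(i < m) (t%:R - i%:R) :> R.
Proof.
elim: m => [|m IHm]; first by rewrite big_ord0 ffactn0.
rewrite big_ord_recr /= -IHm ffactnSr natrM.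
by have [/natrB ->|/ffact_small ->] := leqP m t; last rewrite !mul0r.
Qed.

Definition binomial_poly m : {poly R} :=
  (m`!%:R)^-1 *: \prod_(i < m) ('X - i%:R%:P).

Lemma binomial_polyE m t : (binomial_poly m).[t%:R] = 'C(t, m)%:R.
Proof.
rewrite hornerZ horner_prod.
under eq_bigr => i _ do rewrite hornerXsubC.
by rewrite -natr_ffact -bin_ffact natrM mulrC mulfK // pnatr_eq0 -lt0n fact_gt0.
Qed.

Lemma binomial_span_poly N f :
  binomial_span N f -> exists p : {poly R}, forall t, p.[t%:R] = f t.
Proof.
move=> [c fc]; exists (\sum_(m < N) c m *: binomial_poly m) => t.
by rewrite horner_sum fc; apply: eq_bigr => i _; rewrite hornerZ binomial_polyE.
Qed.

Lemma poly_eq_on_nat (p q : {poly R}) :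
  (forall t : nat, p.[t%:R] = q.[t%:R]) -> p = q.
Proof.
move=> pq; apply/eqP; rewrite -subr_eq0; apply/eqP.
apply: (@roots_geq_poly_eq0 _ _ [seq i%:R | i <- iota 0 (size (p - q))]).
- by apply/allP => _ /mapP[i _ ->]; rewrite /root hornerD hornerN pq subrr.
- by rewrite map_inj_uniq ?iota_uniq //; apply: mulrIn; rewrite oner_neq0.
- by rewrite size_map size_iota.
Qed.

Lemma coef1M_eq0 (p q : {poly R}) : p`_0 = 0 -> q`_0 = 0 -> (p * q)`_1 = 0.
Proof.
move=> p0 q0; rewrite coefM !big_ord_recl big_ord0 /= p0 q0.
by rewrite !mul0r mulr0 !addr0.
Qed.

End BinomialSpan.

Lemma card_set_sum (T : finType) (P : pred T) : #|[set x | P x]| = \sum_x P x.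
Proof.
by rewrite -sum1_card big_mkcond; apply: eq_bigr => x _; rewrite inE; case: (P x).
Qed.

Lemma ltn_trichotomy_sum m k : (m < k) + (k < m) + (m == k) = 1.
Proof. by case: ltngtP. Qed.

Lemma ltn_pair_trichotomy m k l :
  (m < k) && (m < l) =
  (k < l) && (m < k) + (l < k) && (m < l) + (m < k) && (m < l) && (k == l) :> nat.
Proof.
case: (ltngtP k l) => [kl|lk|<-]; rewrite ?andbT ?andbF ?addn0 ?add0n ?andbb //.
- by case: (ltnP m k) => // mk; rewrite (ltn_trans mk kl).
- by case: (ltnP m l) => ml; rewrite ?andbF // (ltn_trans ml lk).
Qed.

Section Labellings.

Variable n : nat.
Implicit Types (E : {set 'I_n * 'I_n}) (W S A : {set 'I_n}) (t : nat).

(* Label 0 marks the vertices outside W, so the labels of W range over 1..t. *)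
Definition labelling E W t (x : {ffun 'I_n -> 'I_t.+1}) : bool :=
  [forall v, (0 < x v) == (v \in W)] &&
  [forall e in E, (e.1 \in W) ==> (e.2 \in W) ==> (x e.1 < x e.2)].

Definition nlabellings E W t :=
  #|[set x : {ffun 'I_n -> 'I_t.+1} | labelling E W x]|.

Lemma labellingP E W t (x : {ffun 'I_n -> 'I_t.+1}) :
  reflect ((forall v, (0 < x v) = (v \in W)) /\
           (forall e, e \in E -> e.1 \in W -> e.2 \in W -> x e.1 < x e.2))
          (labelling E W x).
Proof.
apply: (iffP andP) => [[/forallP xW /forall_inP xE]|[xW xE]]; split.
- by move=> v; apply/eqP: (xW v).
- by move=> e eE e1W e2W; have := xE e eE; rewrite e1W e2W.
- by apply/forallP => v; rewrite xW.
- by apply/forall_inP => e eE; apply/implyP => e1W; apply/implyP; apply: xE.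
Qed.

Lemma labelling_out E W t (x : {ffun 'I_n -> 'I_t.+1}) v :
  labelling E W x -> v \notin W -> x v = ord0.
Proof.
move=> /labellingP[xW _] vW; apply: val_inj => /=.
by apply/eqP; rewrite -leqn0 leqNgt xW (negbTE vW).
Qed.

Lemma nlabellings0 E W : W != set0 -> nlabellings E W 0 = 0.
Proof.
case/set0Pn => a aW; apply/eqP; rewrite cards_eq0; apply/eqP/setP => x.
rewrite !inE; apply/negbTE/negP => /labellingP[xW _].
by have := xW a; rewrite aW; case: (x a) => -[].
Qed.

Definition positive t (x : {ffun 'I_n -> 'I_t.+1}) := [forall v, 0 < x v].

Definition increasing E t (x : {ffun 'I_n -> 'I_t.+1}) :=
  [forall e in E, x e.1 < x e.2].

Lemma labelling_setT E t (x : {ffun 'I_n -> 'I_t.+1}) :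
  labelling E setT x = positive x && increasing E x.
Proof.
apply/labellingP/andP => [[xT xE]|[/forallP xT /forall_inP xE]]; split.
- by apply/forallP => v; rewrite xT inE.
- by apply/forall_inP => e eE; rewrite xE ?inE.
- by move=> v; rewrite xT inE.
- by move=> e eE _ _; apply: xE.
Qed.

Lemma increasingD1 E t (x : {ffun 'I_n -> 'I_t.+1}) e0 : e0 \in E ->
  increasing E x = (x e0.1 < x e0.2) && increasing (E :\ e0) x.
Proof.
move=> e0E; apply/forall_inP/andP => [xE|[xe0 /forall_inP xE] e eE].
  by split; [apply: xE | apply/forall_inP => e /setD1P[_ /xE]].
by have [-> //|e_e0] := eqVneq e e0; apply: xE; rewrite !inE e_e0.
Qed.

Lemma increasingU1 E t (x : {ffun 'I_n -> 'I_t.+1}) e1 :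
  increasing (E :|: [set e1]) x = (x e1.1 < x e1.2) && increasing E x.
Proof.
apply/forall_inP/andP => [xE|[xe1 /forall_inP xE] e].
  split; first by apply: xE; rewrite !inE eqxx orbT.
  by apply/forall_inP => e eE; apply: xE; rewrite inE eE.
by rewrite !inE => /orP[/xE // | /eqP ->].
Qed.

Section TopLayer.

Variables (E : {set 'I_n * 'I_n}) (W : {set 'I_n}) (t : nat).

Definition top_layer S :=
  (S \subset W) && [forall e in E, (e.1 \in S) ==> (e.2 \notin W)].

Definition top_vertices (x : {ffun 'I_n -> 'I_t.+2}) :=
  [set v | val (x v) == t.+1].

Definition lift_top S (y : {ffun 'I_n -> 'I_t.+1}) : {ffun 'I_n -> 'I_t.+2} :=
  [ffun v => if v \in S then ord_max else widen_ord (leqnSn _) (y v)].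

Lemma top_layer_top_vertices x : labelling E W x -> top_layer (top_vertices x).
Proof.
move=> /labellingP[xW xE]; have topW v : v \in top_vertices x -> v \in W.
  by rewrite inE -xW => /eqP ->.
apply/andP; split; first by apply/subsetP.
apply/forall_inP => e eE; apply/implyP => e1top; apply/negP => e2W.
have := xE e eE (topW _ e1top) e2W; move: e1top; rewrite inE => /eqP ->.
by rewrite ltnNge -ltnS ltn_ord.
Qed.

Lemma top_vertices_lift S y : top_vertices (lift_top S y) = S.
Proof.
apply/setP => v; rewrite inE ffunE.
by case: (v \in S); rewrite /= ?eqxx // ltn_eqF.
Qed.

Lemma labelling_lift_top S y :
  top_layer S -> labelling E (W :\: S) y -> labelling E W (lift_top S y).
Proof.
move=> /andP[SW /forall_inP SE] /labellingP[yW yE]; apply/labellingP; split.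
  move=> v; rewrite ffunE; case: ifP => vS /=; first by rewrite (subsetP SW).
  by rewrite yW inE vS.
move=> e eE e1W e2W; rewrite !ffunE.
have [e1S|e1S] := boolP (e.1 \in S); first by have := SE e eE; rewrite e1S e2W.
case: ifP => e2S /=; first exact: ltn_ord.
by apply: yE; rewrite // inE ?e1S ?e2S.
Qed.

Lemma lift_top_inj S :
  {in [set y | labelling E (W :\: S) y] &, injective (lift_top S)}.
Proof.
move=> y1 y2; rewrite !inE => y1W y2W /ffunP y12; apply/ffunP => v.
have [vS|vS] := boolP (v \in S).
  by rewrite (labelling_out y1W) ?(labelling_out y2W) // inE vS.
by have := y12 v; rewrite !ffunE (negbTE vS) => /(congr1 val) /= /val_inj.
Qed.

Lemma lift_top_surj x : labelling E W x ->
  exists2 y, labelling E (W :\: top_vertices x) y &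
             x = lift_top (top_vertices x) y.
Proof.
move=> /labellingP[xW xE]; set S := top_vertices x.
have xS v : (v \in S) = (val (x v) == t.+1) by rewrite inE.
have xlt v : v \notin S -> x v < t.+1.
  by move=> vS; have := ltn_ord (x v); rewrite ltnS leq_eqVlt -xS (negbTE vS).
exists [ffun v => inord (if v \in S then 0 else x v) : 'I_t.+1].
  apply/labellingP; split.
    move=> v; rewrite ffunE in_setD; case: (boolP (v \in S)) => vS /=.
      by rewrite inordK.
    by rewrite inordK ?xlt // xW.
  move=> e eE; rewrite !in_setD => /andP[e1S e1W] /andP[e2S e2W].
  by rewrite !ffunE (negbTE e1S) (negbTE e2S) !inordK ?xlt // xE.
apply/ffunP => v; rewrite !ffunE; case: (boolP (v \in S)) => vS.
  by apply: val_inj; apply/eqP; rewrite -xS.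
by apply: val_inj; rewrite /= inordK ?xlt.
Qed.

Lemma card_top_fibre S : top_layer S ->
  #|[set x | labelling E W x && (top_vertices x == S)]| =
  nlabellings E (W :\: S) t.
Proof.
move=> topS; rewrite /nlabellings -(card_in_imset (@lift_top_inj S)).
apply: eq_card => x; rewrite inE; apply/andP/imsetP => [[xW /eqP <-]|[y]].
  have [y yW ->] := lift_top_surj xW.
  by exists y; rewrite ?inE ?top_vertices_lift.
by rewrite inE => yW ->; rewrite top_vertices_lift labelling_lift_top.
Qed.

Lemma nlabellingsS :
  nlabellings E W t.+1 = \sum_(S | top_layer S) nlabellings E (W :\: S) t.
Proof.
rewrite [LHS]/nlabellings -sum1_card.
rewrite (partition_big top_vertices top_layer) => [|x]; last first.
  by rewrite inE => /top_layer_top_vertices.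
apply: eq_bigr => S topS; rewrite -card_top_fibre // -sum1_card.
by apply: eq_bigl => x; rewrite !inE.
Qed.

End TopLayer.

Lemma nlabellings_binomial_span E k W :
  #|W| < k -> binomial_span k (fun t => (nlabellings E W t)%:R : rat)%R.
Proof.
elim: k W => [//|k IHk] W Wk.
apply: (binomial_span_antidiff (g := fun t =>
  \sum_(S | top_layer E W S && (S != set0)) (nlabellings E (W :\: S) t)%:R)%R).
  apply: binomial_span_sum => S /andP[/andP[SW _] S0]; apply: IHk.
  rewrite cardsD (setIidPr SW); have := subset_leq_card SW.
  by rewrite -card_gt0 in S0; lia.
move=> t; rewrite nlabellingsS natr_sum (bigD1 set0) ?setD0 //=.
by rewrite /top_layer sub0set; apply/forall_inP => e _; rewrite inE.
Qed.

Definition restrict A t (x : {ffun 'I_n -> 'I_t.+1}) : {ffun 'I_n -> 'I_t.+1} :=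
  [ffun v => if v \in A then x v else ord0].

Section Split.

Variables (E : {set 'I_n * 'I_n}) (A : {set 'I_n}) (t : nat).
Hypothesis EA : forall e, e \in E -> (e.1 \in A) = (e.2 \in A).

Lemma labelling_split (x : {ffun 'I_n -> 'I_t.+1}) :
  labelling E setT x =
  labelling E A (restrict A x) && labelling E (~: A) (restrict (~: A) x).
Proof.
apply/labellingP/andP => [[xT xE]|[/labellingP[xA xAE] /labellingP[xC xCE]]].
  split; apply/labellingP; split.
  - by move=> v; rewrite ffunE; case: ifP; rewrite ?xT ?inE.
  - by move=> e eE e1A e2A; rewrite !ffunE e1A e2A xE ?inE.
  - by move=> v; rewrite ffunE; case: ifP; rewrite ?xT ?inE.
  - by move=> e eE e1A e2A; rewrite !ffunE e1A e2A xE ?inE.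
split=> [v|e eE _ _].
  by have := xA v; have := xC v; rewrite !ffunE !inE; case: (v \in A).
have := xAE e eE; have := xCE e eE; rewrite !ffunE !inE -(EA eE).
by case: (e.1 \in A) => /= xe1 xe2; [apply: xe2 | apply: xe1].
Qed.

Lemma nlabellings_split :
  nlabellings E setT t = nlabellings E A t * nlabellings E (~: A) t.
Proof.
pose res (x : {ffun 'I_n -> 'I_t.+1}) := (restrict A x, restrict (~: A) x).
have res_inj : injective res.
  move=> x1 x2 [/ffunP x12A /ffunP x12C]; apply/ffunP => v.
  by have := x12A v; have := x12C v; rewrite !ffunE inE; case: (v \in A).
rewrite /nlabellings -cardsX -(card_imset _ res_inj); apply: eq_card => -[y z].
apply/imsetP/setXP => [[x]|[]]; rewrite !inE.
  by rewrite labelling_split => /andP[xA xC] [-> ->].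
move=> yA zC; pose m := [ffun v => if v \in A then y v else z v].
have resm : res m = (y, z).
  congr pair; apply/ffunP => v; rewrite !ffunE ?inE;
    case: (boolP (v \in A)) => //= vA.
  - by rewrite (labelling_out yA).
  - by rewrite (labelling_out zC) ?inE ?vA.
exists m => //; rewrite inE labelling_split.
by case: resm => -> ->; rewrite yA zC.
Qed.

End Split.

End Labellings.

Definition order_count (G : ograph) t := nlabellings (ed G) setT t.

Lemma order_count_iso G1 G2 t : oiso G1 G2 -> order_count G1 t = order_count G2 t.
Proof.
case=> g [[h gK hK] Eg].
pose pull (y : {ffun 'I_(nv G2) -> 'I_t.+1}) := [ffun v => y (g v)].
have pull_inj : injective pull.
  move=> y1 y2 /ffunP y12; apply/ffunP => z.
  by have := y12 (h z); rewrite !ffunE hK.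
rewrite /order_count /nlabellings -(card_imset _ pull_inj).
apply: eq_card => x; rewrite inE; apply/idP/imsetP.
  rewrite labelling_setT => /andP[/forallP xpos /forall_inP xinc].
  exists [ffun z => x (h z)]; last by apply/ffunP => v; rewrite !ffunE gK.
  rewrite inE labelling_setT; apply/andP; split.
    by apply/forallP => z; rewrite ffunE.
  apply/forall_inP => -[z1 z2] zE.
  by rewrite !ffunE (xinc (h z1, h z2)) // Eg !hK.
case=> y; rewrite inE !labelling_setT => /andP[/forallP ypos /forall_inP yinc] ->.
apply/andP; split; first by apply/forallP => v; rewrite ffunE.
by apply/forall_inP => -[u w] uwE; rewrite !ffunE (yinc (g u, g w)) // -Eg.
Qed.

Lemma order_count_point G t : nv G = 1%N -> ed G = set0 -> order_count G t = t.
Proof.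
case: G => m E /= m1 E0; subst m E; rewrite /order_count /nlabellings.
have const_inj : injective (fun i : 'I_t.+1 => [ffun _ : 'I_1 => i]).
  by move=> i j /ffunP /(_ ord0); rewrite !ffunE.
transitivity #|[set~ ord0 : 'I_t.+1]|; last by rewrite cardsC1 card_ord.
rewrite -(card_imset _ const_inj).
apply: eq_card => x; rewrite !inE labelling_setT; apply/andP/imsetP.
  case=> /forallP xpos _; exists (x ord0); first by rewrite !inE -lt0n xpos.
  by apply/ffunP => v; rewrite ffunE ord1.
case=> i; rewrite !inE -lt0n => i0 ->; split.
  by apply/forallP => v; rewrite ffunE.
by apply/forall_inP => e; rewrite inE.
Qed.

Lemma nlabellings_quotient (G : ograph) (b c : 'I_(nv G)) E (U : ograph) t :
  quotient_by b c E U ->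
  #|[set x : {ffun 'I_(nv G) -> 'I_t.+1} | labelling E setT x && (x b == x c)]| =
  order_count U t.
Proof.
case=> f [f_surj fbc f_fibres edU].
have [g fK] : exists g : 'I_(nv U) -> 'I_(nv G), cancel g f.
  by have [g gP] := fin_all_exists f_surj; exists g.
pose pull (y : {ffun 'I_(nv U) -> 'I_t.+1}) := [ffun v => y (f v)].
have pull_inj : injective pull.
  move=> y1 y2 /ffunP y12; apply/ffunP => z.
  by have := y12 (g z); rewrite !ffunE fK.
rewrite /order_count /nlabellings -(card_imset _ pull_inj).
apply: eq_card => x; rewrite inE; apply/andP/imsetP.
  rewrite labelling_setT => -[/andP[/forallP xpos /forall_inP xinc] /eqP xbc].
  have xgf v : x (g (f v)) = x v.
    by case: (f_fibres _ _ (fK (f v))) => [->|[[-> ->]|[-> ->]]]; rewrite ?xbc.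
  exists [ffun z => x (g z)]; last by apply/ffunP => v; rewrite !ffunE xgf.
  rewrite inE labelling_setT; apply/andP; split.
    by apply/forallP => z; rewrite ffunE.
  apply/forall_inP => e'; rewrite edU => /imsetP[e eE ->].
  by rewrite !ffunE !xgf xinc.
case=> y; rewrite inE !labelling_setT => /andP[/forallP ypos /forall_inP yinc] ->.
rewrite !ffunE fbc eqxx; split=> //; apply/andP; split.
  by apply/forallP => v; rewrite ffunE.
apply/forall_inP => e eE; rewrite !ffunE (yinc (f e.1, f e.2)) // edU.
by apply/imsetP; exists e.
Qed.

Definition delete_edge (G : ograph) (a b : 'I_(nv G)) : ograph :=
  @OGraph (nv G) (ed G :\ (a, b)).

Lemma order_count_reverse_contract (T : ograph) (a b : 'I_(nv T)) U t :
  (a, b) \in ed T -> contract_edge a b U ->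
  order_count T t + order_count (reverse_edge a b) t + order_count U t =
  order_count (delete_edge a b) t.
Proof.
move=> abE abU; rewrite -(nlabellings_quotient t abU) /order_count /nlabellings.
rewrite !card_set_sum -!big_split; apply: eq_bigr => x _ /=.
rewrite !labelling_setT (increasingD1 x abE) increasingU1 -val_eqE /=.
case: (positive x) (increasing _ x) => -[]; rewrite ?andbF ?andbT //=.
exact: ltn_trichotomy_sum.
Qed.

Lemma order_count_identify_ends (T : ograph) (a b c : 'I_(nv T)) U t :
  (a, b) \in ed T -> (a, c) \in ed T -> b != c -> identify_ends b c U ->
  order_count T t = order_count (replace_edge a c b c) t +
                    order_count (replace_edge a b c b) t + order_count U t.
Proof.
move=> abE acE bc bcU.
rewrite -(nlabellings_quotient t bcU) /order_count /nlabellings.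
rewrite !card_set_sum -!big_split; apply: eq_bigr => x _ /=.
have ab_ac : (a, b) \in ed T :\ (a, c) by rewrite !inE abE xpair_eqE eqxx bc.
have ac_ab : (a, c) \in ed T :\ (a, b).
  by rewrite !inE acE xpair_eqE eqxx eq_sym bc.
rewrite !labelling_setT !increasingU1 (increasingD1 x abE) (increasingD1 x ac_ab).
rewrite (increasingD1 x ab_ac) -val_eqE /=.
have -> : ed T :\ (a, c) :\ (a, b) = ed T :\ (a, b) :\ (a, c).
  by rewrite !setDDl setUC.
case: (positive x) (increasing _ x) => -[]; rewrite ?andbF ?andbT //=.
exact: ltn_pair_trichotomy.
Qed.

Lemma connect_rank (T : finType) (e : rel T) (r : T) :
  (forall v, connect e r v) ->
  exists d : T -> nat, forall v, v != r -> exists2 u, e u v & d u < d v.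
Proof.
move=> r_conn.
pose grow (S : {set T}) := S :|: [set w | [exists u in S, e u w]].
pose ball k := iter k grow [set r].
have ball_path p x k :
    x \in ball k -> path e x p -> last x p \in ball (k + size p).
  elim: p x k => [|y p IHp] x k xk /=; first by rewrite addn0.
  case/andP => exy yp; rewrite -addSnnS; apply: IHp yp.
  by rewrite /= !inE; apply/orP; right; apply/existsP; exists x; rewrite xk.
have in_ball v : exists k, v \in ball k.
  have /connectP[p rp ->] := r_conn v; exists (size p).
  by apply: (ball_path p r 0) => //; rewrite /= inE.
exists (fun v => ex_minn (in_ball v)) => v vr.
case: ex_minnP => -[|k]; first by rewrite /= inE (negbTE vr).
rewrite /= inE => /orP[vk /(_ k vk)|]; first by rewrite ltnn.
rewrite inE => /existsP[u /andP[uk euv]] _; exists u => //.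
by case: ex_minnP => m _ /(_ k uk).
Qed.

Lemma connected_card_edges (G : ograph) (r : 'I_(nv G)) :
  (forall v, connect (@uadj G) r v) -> (nv G).-1 <= #|ed G|.
Proof.
move=> /connect_rank[d dP].
pose toward v (f : 'I_(nv G) * 'I_(nv G)) :=
  ((f.1 == v) && (d f.2 < d v)) || ((f.2 == v) && (d f.1 < d v)).
have edge_toward v : v != r -> exists2 f, f \in ed G & toward v f.
  move=> /dP[u /orP[uv|vu] du].
  - by exists (u, v) => //; rewrite /toward /= eqxx du orbT.
  - by exists (v, u) => //; rewrite /toward /= eqxx du.
pose phi v := odflt (r, r) [pick f in ed G | toward v f].
have phiP v : v != r -> (phi v \in ed G) && toward v (phi v).
  move=> /edge_toward[f fE vf]; rewrite /phi.
  by case: pickP => [f' /andP[-> ->] //|/(_ f)]; rewrite fE vf.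
have -> : (nv G).-1 = #|[set~ r]| by rewrite cardsC1 card_ord.
(* Each v != r is charged an edge to a vertex of smaller rank; no edge is
   charged twice. *)
rewrite -(@card_in_imset _ _ phi) => [|v w]; last first.
  rewrite !inE => vr wr phivw.
  have /andP[_] := phiP v vr; have /andP[_] := phiP w wr.
  rewrite -phivw /toward; move: (phi v) => f.
  case/orP => /andP[/eqP fw dw]; case/orP => /andP[/eqP fv dv]; subst v w => //.
  - by have := ltn_trans dw dv; rewrite ltnn.
  - by have := ltn_trans dw dv; rewrite ltnn.
apply: subset_leq_card; apply/subsetP => f /imsetP[v]; rewrite !inE => vr ->.
by case/andP: (phiP v vr).
Qed.

Lemma tree_delete_edge_disconnected (T : ograph) (a b : 'I_(nv T)) :
  is_otree T -> (a, b) \in ed T -> ~~ connect (@uadj (delete_edge a b)) a b.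
Proof.
case=> _ _ _ T_conn T_card abE; apply/negP => ab_conn.
have uadj_sym : symmetric (@uadj (delete_edge a b)).
  by move=> u w; rewrite /uadj orbC.
have T_sub : subrel (@uadj T) (connect (@uadj (delete_edge a b))).
  move=> u w /orP[uw|wu].
  - have [[-> ->] //|ne] := eqVneq (u, w) (a, b).
    by apply: connect1; rewrite /uadj /= !inE ne uw.
  - have [[-> ->]|ne] := eqVneq (w, u) (a, b).
      by rewrite (sym_connect_sym uadj_sym).
    by apply: connect1; rewrite /uadj /= !inE ne wu orbT.
have := @connected_card_edges (delete_edge a b) a
  (fun v => connect_sub T_sub (T_conn a v)).
by rewrite /= -T_card (cardsD1 (a, b) (ed T)) abE add1n ltnn.
Qed.

Local Open Scope ring_scope.

Lemma nlabellings_poly n (E : {set 'I_n * 'I_n}) W :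
  exists p : {poly rat}, forall t, p.[t%:R] = (nlabellings E W t)%:R.
Proof.
apply: (@binomial_span_poly _ n.+1); apply: nlabellings_binomial_span.
by rewrite ltnS (leq_trans (max_card _)) ?card_ord.
Qed.

Definition order_poly (G : ograph) : {poly rat} :=
  proj1_sig (constructive_indefinite_description _
               (nlabellings_poly (ed G) setT)).

Lemma order_polyE G t : (order_poly G).[t%:R] = (order_count G t)%:R.
Proof. by rewrite /order_poly; case: constructive_indefinite_description. Qed.

Lemma order_poly_natE G (p : {poly rat}) :
  (forall t, p.[t%:R] = (order_count G t)%:R) -> order_poly G = p.
Proof. by move=> pG; apply: poly_eq_on_nat => t; rewrite order_polyE pG. Qed.

Lemma order_poly_coef1_disconnected G a b :
  ~~ connect (@uadj G) a b -> (order_poly G)`_1 = 0.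
Proof.
move=> ab_disc; pose A := [set v | connect (@uadj G) a v].
have A_closed e : e \in ed G -> (e.1 \in A) = (e.2 \in A).
  move=> eE; rewrite !inE; apply/idP/idP => ae;
    apply: connect_trans ae (connect1 _).
    by rewrite /uadj -surjective_pairing eE.
  by rewrite /uadj -surjective_pairing eE orbT.
have vanish0 p W : W != set0 ->
    (forall t, p.[t%:R] = (nlabellings (ed G) W t)%:R) -> p`_0 = 0.
  by move=> W0 pW; rewrite -horner_coef0 (pW 0%N) nlabellings0.
have [pA pAE] := nlabellings_poly (ed G) A.
have [pC pCE] := nlabellings_poly (ed G) (~: A).
have -> : order_poly G = pA * pC.
  apply: order_poly_natE => t.
  by rewrite hornerM pAE pCE -natrM /order_count (nlabellings_split _ A_closed).
apply: coef1M_eq0; [apply: vanish0 pAE | apply: vanish0 pCE]; apply/set0Pn.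
- by exists a; rewrite inE connect0.
- by exists b; rewrite !inE.
Qed.

Theorem lemma11p1 :
  exists eta : ograph -> rat,
  [/\ (forall T1 T2, is_otree T1 -> is_otree T2 -> oiso T1 T2 -> eta T1 = eta T2),
      (forall T, is_otree T -> nv T = 1%N -> #|ed T| = 0%N -> eta T = 1),
      (forall (T : ograph) (a b : 'I_(nv T)) (U : ograph),
          is_otree T -> (a, b) \in ed T -> contract_edge a b U ->
          eta T + eta (reverse_edge a b) + eta U = 0)
    & (forall (T : ograph) (a b c : 'I_(nv T)) (U : ograph),
          is_otree T -> (a, b) \in ed T -> (a, c) \in ed T -> b != c ->
          identify_ends b c U ->
          eta T = eta (replace_edge a c b c) + eta (replace_edge a b c b) + eta U) ].
Proof.
exists (fun G => (order_poly G)`_1); split.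
- move=> T1 T2 _ _ iso.
  apply/(congr1 (fun p : {poly rat} => p`_1))/order_poly_natE => t.
  by rewrite order_polyE (order_count_iso t iso).
- move=> T _ n1 /eqP; rewrite cards_eq0 => /eqP e0.
  rewrite (@order_poly_natE T 'X) ?coefX // => t.
  by rewrite hornerX order_count_point.
- move=> T a b U T_tree abE abU; rewrite -!coefD.
  have -> : order_poly T + order_poly (reverse_edge a b) + order_poly U =
            order_poly (delete_edge a b).
    apply/esym/order_poly_natE => t.
    by rewrite !hornerD !order_polyE -!natrD order_count_reverse_contract.
  exact: order_poly_coef1_disconnected (tree_delete_edge_disconnected T_tree abE).
- move=> T a b c U _ abE acE bc bcU; rewrite -!coefD.
  apply/(congr1 (fun p : {poly rat} => p`_1))/order_poly_natE => t.
  by rewrite !hornerD !order_polyE -!natrD -order_count_identify_ends.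
Qed.
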